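(* With the notation of the context below, the following hold: (1) As a polynomial in $\alpha$ and $\beta$, the polynomial $d_2(r)$ cannot be divided by $\beta-\alpha$. (2) The polynomial $c_2(r)$ does not have roots $r = \pm 2$. (3) The polynomial $c_2(r)$ is separable.
   Context: Let $K$ be a field of characteristic $p \geq 5$ with $p \equiv 5 \pmod{6}$. Consider the quartic $F := x^3z + y^4 + ry^2z^2 + z^4$. Let $c_2(r)$ denote the coefficient of $x^{2p-1}y^{p-1}z^{p-2}$ in $F^{p-1}$, regarded as a polynomial in $r$. Let $d_2(r)$ denote the coefficient of $y^{p-1}$ in $(y^4+ry^2+1)^{(p-2)/3}$; one has $d_2(r) = \binom{p-1}{(p-2)/3} c_2(r)$. Write $y^4 + ry^2 + 1 = (y^2+\alpha)(y^2+\beta)$, i.e. $\alpha+\beta = r$ and $\alpha\beta = 1$, so that $d_2(r)$ becomes the symmetric polynomial $d_2(r) = \sum_{i+j=(p-5)/6}\binom{(p-2)/3}{i}\binom{(p-2)/3}{j}\alpha^i\beta^j$ in $\alpha$ and $\beta$; in particular $r^2-4 = (\beta-\alpha)^2$. *)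

From HB Require Import structures.
From mathcomp Require Import all_boot all_order all_algebra all_field.
From mathcomp Require Import mpoly.
Set Implicit Arguments. Unset Strict Implicit. Unset Printing Implicit Defensive.
Import GRing.Theory.
Local Open Scope ring_scope.

(* The quartic F = x^3 z + y^4 + r y^2 z^2 + z^4, with variables
   x = 'X_0, y = 'X_1, z = 'X_2 and coefficients in K[r] = {poly K}
   (r is the polynomial variable 'X of {poly K}). *)
Definition Fquartic (K : fieldType) : {mpoly {poly K}[3]} :=
  'X_(inord 0) ^+ 3 * 'X_(inord 2) + 'X_(inord 1) ^+ 4
  + ('X : {poly K})%:MP * 'X_(inord 1) ^+ 2 * 'X_(inord 2) ^+ 2
  + 'X_(inord 2) ^+ 4.

Definition c2 (K : fieldType) (p : nat) : {poly K} :=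
  (Fquartic K ^+ (p - 1))@_[multinom [tuple (2 * p - 1)%N; (p - 1)%N; (p - 2)%N]].

(* d_2 written as a polynomial in alpha = 'X_0 and beta = 'X_1:
   sum_{i+j=(p-5)/6} C((p-2)/3, i) C((p-2)/3, j) alpha^i beta^j. *)
Definition d2ab (K : fieldType) (p : nat) : {mpoly K[2]} :=
  let m := ((p - 2) %/ 3)%N in
  let n := ((p - 5) %/ 6)%N in
  \sum_(i < n.+1)
    (('C(m, i) * 'C(m, n - i))%:R : K) *: ('X_(inord 0) ^+ i * 'X_(inord 1) ^+ (n - i)).

From HB Require Import structures.
From mathcomp Require Import all_boot all_order all_algebra all_field.
From mathcomp Require Import mpoly.
From mathcomp Require Import zify ring.
From Stdlib Require Import Classical.
Set Implicit Arguments. Unset Strict Implicit. Unset Printing Implicit Defensive.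
Import GRing.Theory.
Local Open Scope ring_scope.

(* Write p = 6q + 5, m = 2q + 1 and N = 3q + 2.  Expanding F^(p-1) binomially in x^3 z, only
   the power (x^3 z)^(4q+3) reaches x-degree 2p - 1, so c_2 = C(p-1, 4q+3) g where g(r) is
   the coefficient of y^N in (y^2 + r y + 1)^m.  Comparing coefficients, g solves
   (4 - r^2) g'' + (2m - 1) r g' + (N^2 - 2mN) g = 0, and g(2c) = c^N C(2m, N) for c = +-1
   because y^2 + 2cy + 1 = (1 + cy)^2; this is nonzero as 2m < p.  If pi^k, k >= 2, is the
   exact power of an irreducible pi dividing g, the equation forces pi to divide
   (4 - r^2) pi'^2 (g / pi^k) (here k < p is used), so pi divides 4 - r^2 and g vanishes
   at 2 or -2: hence g, and c_2, is separable.  Finally d_2 at alpha = beta = 1 is the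
   Vandermonde sum C(2m, q), which is nonzero, whereas beta - alpha vanishes there. *)

Lemma prime_ndvd_fact p a : prime p -> (a < p)%N -> ~~ (p %| a`!)%N.
Proof.
move=> p_pr; elim: a => [|a IHa] lt_a_p.
  by rewrite fact0 dvdn1 neq_ltn prime_gt1 ?orbT.
by rewrite factS Euclid_dvdM // negb_or gtnNdvd // IHa // ltnW.
Qed.

Lemma prime_ndvd_bin p a b : prime p -> (a < p)%N -> (b <= a)%N -> ~~ (p %| 'C(a, b))%N.
Proof.
move=> p_pr lt_a_p le_ba; apply: contra (prime_ndvd_fact p_pr lt_a_p) => dvd_p_bin.
by rewrite -(bin_fact le_ba) dvdn_mulr.
Qed.

Section PrimeCharacteristic.
Variables (K : fieldType) (p : nat).
Hypothesis pcharK : p \in [pchar K].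

Lemma pchar_natr_neq0 k : (0 < k < p)%N -> (k%:R : K) != 0.
Proof. by case/andP=> k_gt0 lt_k_p; rewrite -(dvdn_pcharf pcharK) gtnNdvd. Qed.

Lemma pchar_bin_neq0 a b : (a < p)%N -> (b <= a)%N -> ('C(a, b)%:R : K) != 0.
Proof.
by move=> lt_a_p le_ba; rewrite -(dvdn_pcharf pcharK) prime_ndvd_bin ?(pcharf_prime pcharK).
Qed.

Lemma pchar_deriv_neq0 (u : {poly K}) : (1 < size u <= p)%N -> u^`() != 0.
Proof.
case/andP=> su_gt1 su_le_p; apply/eqP=> u'0.
have u_neq0 : u != 0 by rewrite -size_poly_gt0 ltnW.
have := coef_deriv u (size u).-2; rewrite u'0 coef0 prednK -?subn1 ?subn_gt0 //.
move/esym/eqP; rewrite subn1 -mulr_natr mulf_eq0 -lead_coefE lead_coef_eq0 (negbTE u_neq0) /=.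
apply/negP/pchar_natr_neq0.
by rewrite ltn_predRL su_gt1 (leq_trans _ su_le_p) // ltn_predL ltnW.
Qed.

End PrimeCharacteristic.

Section IrreducibleFactors.
Variable K : fieldType.
Implicit Types (f g u pi : {poly K}).

Lemma exists_irreducible_factor u :
  (1 < size u)%N -> exists2 pi, irreducible_poly pi & pi %| u.
Proof.
elim: {u}(size u) {-2}u (leqnn (size u)) => [|n IHn] u le_su_n su_gt1; first lia.
have [irr_u|red_u] := classic (irreducible_poly u); first by exists u; rewrite ?dvdpp.
have [v [sv_neq1 dvd_vu not_eqp_vu]] : exists v : {poly K}, [/\ size v != 1%N, v %| u & ~~ (v %= u)].
  apply: NNPP => no_v; apply: red_u; split=> // v sv_neq1 dvd_vu; apply/negPn/negP => ?.
  by apply: no_v; exists v.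
have u_neq0 : u != 0 by rewrite -size_poly_gt0 ltnW.
have v_neq0 : v != 0 by apply: contraNneq u_neq0 => v0; rewrite -dvd0p -v0.
have lt_sv_su : (size v < size u)%N.
  by rewrite ltn_neqAle dvdp_size_eqp // not_eqp_vu dvdp_leq.
have sv_gt1 : (1 < size v)%N by rewrite ltn_neqAle eq_sym sv_neq1 size_poly_gt0.
have [|pi irr_pi dvd_pi_v] := IHn v _ sv_gt1; first by rewrite -ltnS (leq_trans lt_sv_su).
by exists pi => //; apply: dvdp_trans dvd_vu.
Qed.

Lemma irreducible_dvdp_XsubC_root f pi a :
  irreducible_poly pi -> pi %| f -> pi %| 'X - a%:P -> root f a.
Proof.
move=> irr_pi dvd_pi_f dvd_pi_Xa.
have eqp_pi_Xa : pi %= 'X - a%:P.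
  rewrite -dvdp_size_eqp // size_XsubC eqn_leq irr_pi.1 andbT.
  by rewrite -(size_XsubC a) dvdp_leq ?polyXsubC_eq0.
by rewrite -dvdp_XsubCl -(eqp_dvdl _ eqp_pi_Xa).
Qed.

Lemma irreducible_dvdp_4subX2_root f pi :
  irreducible_poly pi -> pi %| f -> pi %| 4%:R - 'X^2 -> root f 2 || root f (-2).
Proof.
move=> irr_pi dvd_pi_f.
have -> : 4%:R - 'X^2 = - (('X - 2%:P) * ('X - (-2)%:P)) :> {poly K}.
  by rewrite rmorphN /= -polyC_natr; ring.
rewrite dvdpNr; have [dvd_pi_X2|] := boolP (pi %| 'X - 2%:P).
  by rewrite (irreducible_dvdp_XsubC_root irr_pi dvd_pi_f dvd_pi_X2).
rewrite -irreducible_poly_coprime // => cop; rewrite Gauss_dvdpr // => dvd_pi_X2.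
by rewrite (irreducible_dvdp_XsubC_root irr_pi dvd_pi_f dvd_pi_X2) orbT.
Qed.

Lemma irreducible_coprime_deriv pi :
  irreducible_poly pi -> pi^`() != 0 -> coprimep pi pi^`().
Proof.
move=> irr_pi pi'_neq0; rewrite irreducible_poly_coprime //.
by apply/negP => /(dvdp_leq pi'_neq0); rewrite leqNgt lt_size_deriv ?irredp_neq0.
Qed.

Lemma dvdp_exp_maximal f pi n : f != 0 -> (1 < size pi)%N -> pi ^+ n %| f ->
  exists k g, [/\ (n <= k < size f)%N, f = pi ^+ k * g & ~~ (pi %| g)].
Proof.
move=> f_neq0 spi_gt1 dvd_pin_f.
have pi_neq0 : pi != 0 by rewrite -size_poly_gt0 ltnW.
have bounded k : pi ^+ k %| f -> (k < size f)%N.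
  move=> /(dvdp_leq f_neq0); apply: leq_trans.
  have : (k <= (size (pi ^+ k)).-1)%N by rewrite size_exp leq_pmull // -subn1 subn_gt0.
  by rewrite -ltnS prednK // size_poly_gt0 expf_neq0.
have [k dvd_pik_f max_k] := ex_maxnP (ex_intro _ n dvd_pin_f) (fun k dvd_k => ltnW (bounded k dvd_k)).
exists k, (f %/ pi ^+ k); split; [by rewrite max_k ?bounded | by rewrite divpKC |].
apply/negP => dvd_pi_g; suff /max_k : pi ^+ k.+1 %| f by rewrite ltnn.
by rewrite -(divpKC dvd_pik_f) exprSr dvdp_mul2l ?expf_neq0.
Qed.

End IrreducibleFactors.

Definition gegenbauer_op (K : fieldType) (c1 c0 : K) (f : {poly K}) : {poly K} :=
  (4%:R - 'X^2) * f^`(2) + c1 *: ('X * f^`()) + c0 *: f.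

Lemma deriv_exp_mul (K : fieldType) (pi g : {poly K}) j :
  (pi ^+ j.+1 * g)^`() = pi ^+ j * (pi^`() * g *+ j.+1 + pi * g^`()).
Proof. by rewrite derivM deriv_exp /= exprS; ring. Qed.

Lemma deriv2_exp_mul (K : fieldType) (pi g : {poly K}) j :
  (pi ^+ j.+2 * g)^`(2) =
  pi ^+ j * (pi^`() ^+ 2 * g *+ (j.+2 * j.+1)
             + pi * (pi^`(2) * g *+ j.+2 + pi^`() * g^`() *+ (2 * j.+2) + pi * g^`(2))).
Proof.
rewrite derivnS derivn1 deriv_exp_mul deriv_exp_mul derivD derivMn !derivM !derivnS !derivn0.
ring.
Qed.

Lemma gegenbauer_op_exp_mul (K : fieldType) (c1 c0 : K) (pi g : {poly K}) j :
  exists R, gegenbauer_op c1 c0 (pi ^+ j.+2 * g)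
            = pi ^+ j * ((4%:R - 'X^2) * pi^`() ^+ 2 * g *+ (j.+2 * j.+1) + pi * R).
Proof.
exists ((4%:R - 'X^2) * (pi^`(2) * g *+ j.+2 + pi^`() * g^`() *+ (2 * j.+2) + pi * g^`(2))
        + c1 *: ('X * (pi^`() * g *+ j.+2 + pi * g^`())) + c0 *: (pi * g)).
rewrite /gegenbauer_op deriv2_exp_mul deriv_exp_mul -!mul_polyC !exprS; ring.
Qed.

Section GegenbauerSeparable.
Variables (K : fieldType) (p : nat).
Hypothesis pcharK : p \in [pchar K].

Lemma gegenbauer_separable (c1 c0 : K) (f : {poly K}) :
  f != 0 -> (size f <= p)%N -> ~~ root f 2 -> ~~ root f (-2) ->
  gegenbauer_op c1 c0 f = 0 -> separable_poly f.
Proof.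
move=> f_neq0 sf_le_p f2_neq0 fN2_neq0 ode_f.
apply/separable_polyP; split=> [|u dvd_uf su_gt1]; last first.
  by apply: (pchar_deriv_neq0 pcharK); rewrite su_gt1 (leq_trans (dvdp_leq f_neq0 dvd_uf)).
apply/poly_square_freeP => u su_neq1; apply/negP => dvd_u2_f.
have u_neq0 : u != 0 by apply: contraTneq dvd_u2_f => ->; rewrite expr0n /= dvd0p.
have su_gt1 : (1 < size u)%N by rewrite ltn_neqAle eq_sym su_neq1 size_poly_gt0.
have [pi irr_pi dvd_pi_u] := exists_irreducible_factor su_gt1.
have pi_neq0 := irredp_neq0 irr_pi.
have dvd_pi2_f : pi ^+ 2 %| f := dvdp_trans (dvdp_exp2r 2 dvd_pi_u) dvd_u2_f.
have dvd_pi_f : pi %| f := dvdp_trans (@dvdp_exp _ pi 2 pi isT (dvdpp pi)) dvd_pi2_f.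
have [k [g [/andP[le2k lt_k_sf] f_eq not_dvd_pi_g]]] := dvdp_exp_maximal f_neq0 irr_pi.1 dvd_pi2_f.
case: k le2k lt_k_sf f_eq => [|[|j]] // _ lt_k_sf f_eq.
have [R ode_eq] := gegenbauer_op_exp_mul c1 c0 pi g j.
have : pi %| (4%:R - 'X^2) * pi^`() ^+ 2 * g *+ (j.+2 * j.+1).
  move: ode_f; rewrite f_eq ode_eq => /eqP.
  rewrite mulf_eq0 expf_eq0 (negbTE pi_neq0) andbF /= addr_eq0 => /eqP ->.
  by rewrite dvdpNr dvdp_mulIl.
have fact_neq0 : ((j.+2 * j.+1)%:R : K) != 0.
  by rewrite natrM mulf_neq0 ?(pchar_natr_neq0 pcharK) //; apply/andP; split; lia.
have cop_pi_pi' : coprimep pi pi^`().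
  apply: irreducible_coprime_deriv (pchar_deriv_neq0 pcharK _) => //.
  by rewrite irr_pi.1 (leq_trans (dvdp_leq f_neq0 dvd_pi_f)).
rewrite -scaler_nat dvdpZr // Gauss_dvdpl ?irreducible_poly_coprime //.
rewrite expr2 mulrA !Gauss_dvdpl // => /(irreducible_dvdp_4subX2_root irr_pi dvd_pi_f).
by rewrite (negbTE f2_neq0) (negbTE fN2_neq0).
Qed.

End GegenbauerSeparable.

Lemma exprD3 (R : comNzRingType) (u v w : R) m :
  (u + (v + w)) ^+ m = \sum_(b < m.+1) \sum_(c < (m - b).+1)
     (u ^+ b * v ^+ c * w ^+ (m - b - c)) *+ ('C(m, b) * 'C(m - b, c)).
Proof.
rewrite [u + _]addrC exprDn; apply: eq_bigr => b _.
rewrite [v + w]addrC exprDn mulr_suml -sumrMnl; apply: eq_bigr => c _.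
by rewrite mulrnAl -mulrnA mulnC mulrC -!mulrA [w ^+ _ * _]mulrC.
Qed.

Lemma coef_exp_1DZX (K : fieldType) (c : K) n k :
  (k <= n)%N -> ((1 + c *: 'X) ^+ n)`_k = c ^+ k * 'C(n, k)%:R.
Proof.
move=> le_kn; rewrite exprDn coef_sum (bigD1 (Ordinal (leq_ltn_trans le_kn (ltnSn n)))) //=.
rewrite big1 => [|i /negPf neq_ik]; rewrite expr1n mul1r exprZn coefMn coefZ coefXn.
  by rewrite eqxx mulr1 addr0 mulr_natr.
by rewrite -val_eqE /= in neq_ik; rewrite eq_sym neq_ik mulr0 mul0rn.
Qed.

Lemma coefX2Mderivn2 (K : fieldType) (g : {poly K}) k :
  ('X^2 * g^`(2))`_k = g`_k *+ (k * k.-1).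
Proof.
rewrite coefXnM; case: ltnP => [|le2k]; first by case: k => [|[|]].
by rewrite coef_derivn; case: k le2k => [|[|k]] // _; rewrite subn2 /= ffactnS ffactn1 add2n.
Qed.

Lemma coefXMderiv (K : fieldType) (g : {poly K}) k : ('X * g^`())`_k = g`_k *+ k.
Proof. by rewrite coefXM coef_deriv; case: k => [|k] //=; rewrite mulr0n. Qed.

Lemma coef_derivn2 (K : fieldType) (g : {poly K}) k : g^`(2)`_k = g`_k.+2 *+ (k.+2 * k.+1).
Proof. by rewrite coef_derivn ffactnS ffactn1 add2n. Qed.

Lemma bin_trinomial_rec m b k : (b < m)%N ->
  (k.+2 * k.+1 * 'C(m, b) * 'C(m - b, k.+2) = b.+1 * (m - b.+1 - k) * 'C(m, b.+1) * 'C(m - b.+1, k))%N.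
Proof.
move=> lt_bm; set s := (m - b.+1)%N; have -> : (m - b = s.+1)%N by rewrite /s; lia.
have H1 : (k.+2 * 'C(s.+1, k.+2) = (s - k) * 'C(s.+1, k.+1))%N by rewrite mul_bin_left subSS.
have H2 : (s.+1 * 'C(s, k) = k.+1 * 'C(s.+1, k.+1))%N by rewrite mul_bin_diag.
have H3 : (b.+1 * 'C(m, b.+1) = s.+1 * 'C(m, b))%N.
  by rewrite mul_bin_left; congr (_ * _)%N; rewrite /s; lia.
have := congr1 (muln (k.+1 * 'C(m, b))) H1.
have := congr1 (muln ((s - k) * 'C(m, b))) H2.
have := congr1 (muln ((s - k) * 'C(s, k))) H3.
nia.
Qed.

Definition trinomial_coef (m N k : nat) : nat :=
  (if (k <= N) && ((N - k) %% 2 == 0) then 'C(m, (N - k) %/ 2) * 'C(m - (N - k) %/ 2, k) else 0)%N.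

Lemma trinomial_coef_rec m N k : (N <= 2 * m)%N ->
  (4 * (k.+2 * k.+1) * trinomial_coef m N k.+2 + 2 * m * k * trinomial_coef m N k
     + N * N * trinomial_coef m N k
   = k * k * trinomial_coef m N k + 2 * m * N * trinomial_coef m N k)%N.
Proof.
move=> le_N_2m; rewrite /trinomial_coef.
have [/andP[le_kN /eqP even_Nk]|not_kN] := boolP ((k <= N) && ((N - k) %% 2 == 0))%N; last first.
  rewrite ifF ?muln0 //; apply: contraNF not_kN => /andP[le_k2N /eqP even_Nk2].
  by apply/andP; split; [lia | apply/eqP; lia].
case Eb : ((N - k) %/ 2)%N => [|b].
  have -> : N = k by lia.
  rewrite ifF ?muln0; [nia | by apply/negP => /andP[]; lia].
rewrite ifT; last by apply/andP; split; [lia | apply/eqP; lia].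
have -> : ((N - k.+2) %/ 2 = b)%N by lia.
have lt_bm : (b < m)%N by lia.
have -> : (4 * (k.+2 * k.+1) * ('C(m, b) * 'C(m - b, k.+2))
         = 4 * (b.+1 * (m - b.+1 - k) * ('C(m, b.+1) * 'C(m - b.+1, k))))%N.
  by have := bin_trinomial_rec k lt_bm; lia.
have [le_k_mb|lt_mb_k] := leqP k (m - b.+1); last by rewrite (bin_small lt_mb_k) !muln0.
have key : (4 * (b.+1 * (m - b.+1 - k)) + 2 * m * k + N * N = k * k + 2 * m * N)%N.
  have -> : N = (2 * b.+1 + k)%N by lia.
  nia.
by rewrite mulnA -!mulnDl key.
Qed.

Section TrinomialPoly.
Variables (K : fieldType) (m N : nat).

Definition trinomial_poly : {poly K} :=
  \sum_(b < m.+1) \sum_(c < (m - b).+1) ('X^c *+ ('C(m, b) * 'C(m - b, c) * (2 * b + c == N))%N).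

Lemma horner_trinomial_poly (x : K) :
  trinomial_poly.[x] = (('X^2 + (x *: 'X + 1)) ^+ m)`_N.
Proof.
rewrite exprD3 coef_sum horner_sum; apply: eq_bigr => b _.
rewrite coef_sum horner_sum; apply: eq_bigr => c _.
rewrite hornerMn hornerXn coefMn expr1n mulr1 exprZn -scalerAr -exprM -exprD coefZ coefXn eq_sym.
by case: (_ == _); rewrite ?muln1 ?muln0 ?mulr1 ?mulr0 ?mul0rn.
Qed.

Hypothesis le_N_2m : (N <= 2 * m)%N.

Lemma trinomial_poly_sqr1 (c : K) : c ^+ 2 = 1 ->
  trinomial_poly.[2 * c] = c ^+ N * 'C(2 * m, N)%:R.
Proof.
move=> c2_1; rewrite horner_trinomial_poly -coef_exp_1DZX // exprM.
suff -> : 'X^2 + ((2 * c) *: 'X + 1) = (1 + c *: 'X) ^+ 2 :> {poly K} by [].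
have cP2_1 : c%:P ^+ 2 = 1 :> {poly K} by rewrite -rmorphXn /= c2_1.
have -> : (2 * c) *: 'X = 2%:R * c%:P * 'X :> {poly K} by rewrite -mul_polyC polyCM polyC_natr.
rewrite -mul_polyC -[in LHS](mul1r 'X^2) -{1}cP2_1; ring.
Qed.

Lemma coef_trinomial_poly k : trinomial_poly`_k = (trinomial_coef m N k)%:R.
Proof.
rewrite /trinomial_poly coef_sum.
under eq_bigr => b _ do rewrite coef_sum.
under eq_bigr => b _ do under eq_bigr => c _ do rewrite coefMn coefXn mulrnAC mulrb eq_sym.
under eq_bigr => b _ do rewrite -big_mkcond
  (big_ord1_eq _ (fun c => ('C(m, b) * 'C(m - b, c) * (2 * b + c == N))%N%:R : K)).
set b0 := ((N - k) %/ 2)%N; have lt_b0_m1 : (b0 < m.+1)%N by rewrite /b0; lia.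
rewrite (eq_bigr (fun b : 'I_m.+1 => if b == b0 :> nat then (trinomial_coef m N k)%:R else 0)).
  by rewrite -big_mkcond (big_ord1_eq _ (fun _ => (trinomial_coef m N k)%:R : K)) lt_b0_m1.
move=> b _; rewrite /trinomial_coef -/b0 ltnS.
have [->|neq_b_b0] := eqVneq (b : nat) b0; last first.
  have -> : (2 * b + k == N)%N = false by apply: contraNF neq_b_b0 => /eqP; rewrite /b0; lia.
  by rewrite muln0 if_same.
have [/andP[le_kN /eqP even_Nk]|not_kN] := boolP ((k <= N) && ((N - k) %% 2 == 0))%N.
  have -> : (2 * b0 + k == N)%N by apply/eqP; rewrite /b0; lia.
  by rewrite muln1; have [//|lt_mb_k] := leqP k (m - b0); rewrite (bin_small lt_mb_k) muln0.
have -> : (2 * b0 + k == N)%N = false.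
  by apply: contraNF not_kN => /eqP; rewrite /b0 => ?; apply/andP; split; [lia | apply/eqP; lia].
by rewrite muln0 if_same.
Qed.

Lemma size_trinomial_poly : (size trinomial_poly <= m.+1)%N.
Proof.
apply/leq_sizeP => k lt_mk; rewrite coef_trinomial_poly /trinomial_coef.
by case: ifP => // _; rewrite (@bin_small (m - _) k) ?muln0 //; lia.
Qed.

Lemma trinomial_poly_ode :
  gegenbauer_op ((2 * m)%:R - 1) (N%:R * N%:R - (2 * m * N)%:R) trinomial_poly = 0.
Proof.
apply/polyP => k; rewrite /gegenbauer_op coef0 mulrBl !coefD coefN !coefZ (mulr_natl _ 4) coefMn.
rewrite coefX2Mderivn2 coefXMderiv coef_derivn2 !coef_trinomial_poly.
have := trinomial_coef_rec k le_N_2m.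
set A2 := trinomial_coef m N k.+2; set A := trinomial_coef m N k => /(congr1 (GRing.natmul (1 : K))) rec.
transitivity (((4 * (k.+2 * k.+1) * A2 + 2 * m * k * A + N * N * A)%N%:R : K)
   - (k * k * A + 2 * m * N * A)%N%:R); last by rewrite rec subrr.
by clear rec; case: k A2 A => [|k] A2 A; rewrite ?succnK; ring.
Qed.

End TrinomialPoly.

Definition mnm3 (x y z : nat) : 'X_{1..3} :=
  (U_(inord 0) *+ x + U_(inord 1) *+ y + U_(inord 2) *+ z)%MM.

Lemma mnm3E x y z (i : 'I_3) : mnm3 x y z i = nth 0%N [:: x; y; z] i.
Proof.
rewrite /mnm3 !mnmDE !mulmnE !mnm1E -!val_eqE /= !inordK //.
by case: i => [[|[|[|i]]] lt_i3] //=; lia.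
Qed.

Lemma eq_mnm3_multinom x y z x' y' z' :
  (mnm3 x y z == [multinom [tuple x'; y'; z']]) = [&& x == x', y == y' & z == z'].
Proof.
have tupleE (i : 'I_3) : [multinom [tuple x'; y'; z']] i = nth 0%N [:: x'; y'; z'] i.
  by rewrite mnm_tnth (tnth_nth 0%N).
apply/eqP/and3P => [/mnmP eq_mnm|[/eqP-> /eqP-> /eqP->]].
  have := eq_mnm (inord 0); have := eq_mnm (inord 1); have := eq_mnm (inord 2).
  by rewrite !mnm3E !tupleE !inordK //= => -> -> ->; rewrite !eqxx.
by apply/mnmP => i; rewrite mnm3E tupleE.
Qed.

Section QuarticCoefficient.
Variable K : fieldType.
Local Notation x := ('X_(inord 0) : {mpoly {poly K}[3]}).
Local Notation y := ('X_(inord 1) : {mpoly {poly K}[3]}).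
Local Notation z := ('X_(inord 2) : {mpoly {poly K}[3]}).
Local Notation r := ('X : {poly K}).

Lemma quartic_monomialE a b c e :
  ((y ^+ 4) ^+ b * (r%:MP * y ^+ 2 * z ^+ 2) ^+ c * (z ^+ 4) ^+ e) * (x ^+ 3 * z) ^+ a
  = (r ^+ c)%:MP * 'X_[mnm3 (3 * a) (4 * b + 2 * c) (a + 2 * c + 4 * e)].
Proof.
rewrite /mnm3 !mpolyXD -!mpolyXn !exprMn rmorphXn.
rewrite [(3 * a)%N]mulnC [(4 * b)%N]mulnC [(2 * c)%N]mulnC [(4 * e)%N]mulnC !exprD !exprM.
ring.
Qed.

(* In F^(p-1) = sum_a C(p-1, a) (x^3 z)^a (y^4 + r y^2 z^2 + z^4)^(p-1-a), the x-degree 3a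
   must equal 2p-1 = 12q+9, which singles out a = 4q+3. *)
Lemma coef_quartic_term q a : (a <= 6 * q + 4)%N ->
  ((y ^+ 4 + (r%:MP * y ^+ 2 * z ^+ 2 + z ^+ 4)) ^+ (6 * q + 4 - a) * (x ^+ 3 * z) ^+ a)
     @_[multinom [tuple (12 * q + 9)%N; (6 * q + 4)%N; (6 * q + 3)%N]]
  = if a == (4 * q + 3)%N then trinomial_poly K (2 * q + 1) (3 * q + 2) else 0.
Proof.
move=> le_a; rewrite exprD3 mulr_suml raddf_sum.
under eq_bigr => b _ do rewrite mulr_suml raddf_sum.
under eq_bigr => b _ do under eq_bigr => c _ do
  rewrite mulrnAl raddfMn /= quartic_monomialE mcoeffCM mcoeffX eq_mnm3_multinom.
have [->|neq_a] := eqVneq a (4 * q + 3)%N; last first.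
  apply: big1 => b _; apply: big1 => c _.
  by rewrite (_ : (3 * a)%N == _ = false) ?mulr0 ?mul0rn //; apply/eqP; lia.
rewrite /trinomial_poly (_ : 6 * q + 4 - (4 * q + 3) = 2 * q + 1)%N; last by lia.
apply: eq_bigr => b _; apply: eq_bigr => c _.
have lt_b := ltn_ord b; have lt_c := ltn_ord c.
have -> : [&& (3 * (4 * q + 3))%N == (12 * q + 9)%N, (4 * b + 2 * c)%N == (6 * q + 4)%N
    & (4 * q + 3 + 2 * c + 4 * (2 * q + 1 - b - c))%N == (6 * q + 3)%N] = (2 * b + c == 3 * q + 2)%N.
  by apply/and3P/eqP => [[/eqP ? /eqP ? /eqP ?]|?]; [lia | split; apply/eqP; lia].
by case: (_ == _)%N; rewrite ?mulr1 ?muln1 ?mulr0 ?muln0 ?mul0rn.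
Qed.

Lemma c2_trinomial q :
  c2 K (6 * q + 5) = trinomial_poly K (2 * q + 1) (3 * q + 2) *+ 'C(6 * q + 4, 4 * q + 3).
Proof.
rewrite /c2 /Fquartic -!addrA [_ * z + _]addrC exprDn raddf_sum /=.
have -> : (2 * (6 * q + 5) - 1 = 12 * q + 9)%N by lia.
have -> : (6 * q + 5 - 1 = 6 * q + 4)%N by lia.
have -> : (6 * q + 5 - 2 = 6 * q + 3)%N by lia.
rewrite (bigD1 (inord (4 * q + 3))) //= big1 ?addr0.
  by rewrite raddfMn /= coef_quartic_term ?inordK ?eqxx //; lia.
move=> a /eqP neq_a; rewrite raddfMn /= coef_quartic_term; last by have := ltn_ord a; lia.
rewrite ifF ?mul0rn //; apply/negP => /eqP eq_a; apply: neq_a; apply: val_inj.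
by rewrite /= inordK; lia.
Qed.

End QuarticCoefficient.

Lemma meval1_d2ab (K : fieldType) p :
  meval (fun=> 1) (d2ab K p) = 'C(2 * ((p - 2) %/ 3), (p - 5) %/ 6)%:R.
Proof.
rewrite /d2ab raddf_sum /= mul2n -addnn -binomial.Vandermonde natr_sum.
apply: eq_bigr => i _.
by rewrite mevalZ mevalM !rmorphXn /= !mevalXU !expr1n !mulr1.
Qed.

Lemma d2ab_ndvd (K : fieldType) p :
  p \in [pchar K] -> (5 <= p)%N -> (p %% 6 = 5)%N ->
  ~ (exists q : {mpoly K[2]}, d2ab K p = ('X_(inord 1) - 'X_(inord 0)) * q).
Proof.
move=> pcharK p_ge5 p_mod6 [q d2ab_eq].
have := congr1 (meval (fun=> 1)) d2ab_eq.
rewrite meval1_d2ab mevalM mevalB !mevalXU subrr mul0r; apply/eqP.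
by rewrite (pchar_bin_neq0 pcharK); lia.
Qed.

Unset Implicit Arguments.

Theorem lemma3p3 (K : fieldType) (p : nat) :
  p \in [pchar K] -> (5 <= p)%N -> (p %% 6 = 5)%N ->
  [/\ ~ (exists q : {mpoly K[2]},
           d2ab K p = ('X_(inord 1) - 'X_(inord 0)) * q),
      ~~ root (c2 K p) 2 /\ ~~ root (c2 K p) (-2)
    & separable_poly (c2 K p)].
Proof.
move=> pcharK p_ge5 p_mod6; have d2_ndvd := d2ab_ndvd pcharK p_ge5 p_mod6.
have [q p_eq] : exists q, p = (6 * q + 5)%N by exists (p %/ 6)%N; lia.
subst p.
set g := trinomial_poly K (2 * q + 1) (3 * q + 2).
have le_N_2m : (3 * q + 2 <= 2 * (2 * q + 1))%N by lia.
have bin_neq0 : ('C(6 * q + 4, 4 * q + 3)%:R : K) != 0 by apply: (pchar_bin_neq0 pcharK); lia.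
have c2E : c2 K (6 * q + 5) = 'C(6 * q + 4, 4 * q + 3)%:R *: g.
  by rewrite c2_trinomial scaler_nat.
have g_2c_neq0 (c : K) : c ^+ 2 = 1 -> ~~ root g (2 * c).
  move=> c2_1; rewrite /root trinomial_poly_sqr1 // mulf_neq0 ?(pchar_bin_neq0 pcharK) //; last lia.
  by rewrite expf_neq0 //; apply: contra_eq_neq c2_1 => ->; rewrite expr0n eq_sym oner_neq0.
have g2_neq0 : ~~ root g 2 by have := g_2c_neq0 1; rewrite expr1n mulr1; apply.
have gN2_neq0 : ~~ root g (-2) by have := g_2c_neq0 (-1); rewrite sqrrN expr1n mulrN1; apply.
have g_neq0 : g != 0 by apply: contraNneq g2_neq0 => ->; rewrite root0.
have sep_g : separable_poly g.
  apply: (gegenbauer_separable pcharK) g_neq0 _ g2_neq0 gN2_neq0 (trinomial_poly_ode K le_N_2m).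
  by rewrite (leq_trans (size_trinomial_poly K le_N_2m)) //; lia.
rewrite c2E !rootZ //; split=> //.
by apply: dvdp_separable sep_g; rewrite dvdpZl // dvdpp.
Qed.
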